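(* Let $x \in \mathbb{R}^n$ be deterministic, $y\in\mathbb{R}^n$ deterministic, and $f:\mathbb{R}^n\to\mathbb{R}^n$. Let $\tilde a,\tilde b,\tilde c$ be random vectors in $\mathbb{R}^n$ such that all $3n$ entries are mutually independent, $\mathbb{E}[\tilde a_i] = \mathbb{E}[\tilde b_i] = \mathbb{E}[\tilde c_i] = x_i$ for all $i$, and for each $i$ the variables $\tilde a_i,\tilde b_i,\tilde c_i$ have common finite central moments up to order six; denote by $\sigma_i^2$ their common variance and by $\mu_i^{[4]}$ their common fourth central moment. Let $\widetilde{\mathrm{uSE}}_i := (\tilde a_i - f(y)_i)^2 - \frac{(\tilde b_i - \tilde c_i)^2}{2}$. Then for every $1\le i\le n$, $$\mathrm{Var}[\widetilde{\mathrm{uSE}}_i] \ge \frac{\mu_i^{[4]} + \sigma_i^4}{2}.$$ *)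

From HB Require Import structures.
From mathcomp Require Import all_boot all_order all_algebra.
From mathcomp Require Import all_classical all_reals all_analysis.
Set Implicit Arguments. Unset Strict Implicit. Unset Printing Implicit Defensive.
Import Order.TTheory GRing.Theory Num.Theory.
Local Open Scope classical_set_scope.
Local Open Scope ring_scope.

Definition mutually_independent d (T : measurableType d) (R : realType)
  (P : probability T R) (I : finType) (X : I -> T -> R) : Prop :=
  forall (J : {set I}) (B : I -> set R),
    (forall j, measurable (B j)) ->
    P (\bigcap_(j in [set j | j \in J]) (X j @^-1` B j)) =
    (\prod_(j in J) fine (P (X j @^-1` B j)))%:E.

Definition abc_family d (T : measurableType d) (R : realType) (n : nat)
  (a b c : 'I_n -> T -> R) : 'I_n + 'I_n + 'I_n -> T -> R :=
  fun k => match k with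
           | inl (inl i) => a i
           | inl (inr i) => b i
           | inr i => c i
           end.

Definition cmoment d (T : measurableType d) (R : realType)
  (P : probability T R) (X : T -> R) (m : R) (k : nat) : \bar R :=
  'E_P[fun w => (X w - m) ^+ k].

Definition uSE d (T : measurableType d) (R : realType) (n : nat)
  (a b c : 'I_n -> T -> R) (fy : 'rV[R]_n) (i : 'I_n) : T -> R :=
  fun w => (a i w - fy ord0 i) ^+ 2 - (b i w - c i w) ^+ 2 / 2.

From HB Require Import structures.
From mathcomp Require Import all_boot all_order all_algebra.
From mathcomp Require Import all_classical all_reals all_analysis.
From mathcomp Require Import measurable_realfun simple_functions.
From mathcomp Require Import measurable_fun_approximation.
From mathcomp Require Import ring lra.
Set Implicit Arguments. Unset Strict Implicit. Unset Printing Implicit Defensive.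
Import Order.TTheory GRing.Theory Num.Theory.
Local Open Scope classical_set_scope.
Local Open Scope ring_scope.

(* Write α, β, γ for the centred variables a_i - x_i, b_i - x_i, c_i - x_i,
   σ² and μ₄ for their common second and fourth central moments, and
   δ = x_i - f(y)_i.  Then
     uSE_i - δ² = (α² + 2δα - σ²) + (βγ - (β² - σ²)/2 - (γ² - σ²)/2)
   is a sum of two centred terms, the first a function of a_i and the second
   of (b_i, c_i).  By independence they are uncorrelated, and the second one
   has second moment (μ₄ + σ⁴)/2, so
     Var uSE_i = Var ((a_i - f(y)_i)²) + (μ₄ + σ⁴)/2.
   The moment computations only use that E[g1(a_i) g2(b_i) g3(c_i)] factorizes,
   which follows from mutual independence by approximating each g_k by simple
   functions, one variable at a time. *)

Section integral_comp_weight.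
Context d (T : measurableType d) (R : realType) (mu : {measure set T -> \bar R}).
Local Open Scope ereal_scope.
Import HBNNSimple.

Variable X : {mfun T >-> R}.

Let integral_nnsfun_comp_weight (k : T -> R) (a : \bar R) :
  measurable_fun setT k -> (forall w, 0 <= k w)%R ->
  (forall B, measurable B ->
     \int[mu]_w (\1_B (X w) * k w)%:E = mu (X @^-1` B) * a) ->
  forall phi : {nnsfun R >-> R},
  \int[mu]_w (phi (X w) * k w)%:E =
  (\sum_(r \in range phi) r%:E * mu (X @^-1` (phi @^-1` [set r]))) * a.
Proof.
move=> mk k0 kX phi.
have phiX0 r w : 0 <= (r * \1_(phi @^-1` [set r]) (X w))%:E.
  by rewrite EFinM nnfun_muleindic_ge0.
under eq_integral => w _.
  by rewrite EFinM fimfunE -fsumEFin// ge0_mule_fsuml//; over.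
rewrite ge0_integral_fsum//; last 2 first.
- move=> r; apply: emeasurable_funM; apply/measurable_EFinP => //.
  apply: measurable_funM => //; apply: measurable_indic.
  exact: measurable_funPTI.
- by move=> r w _; rewrite mule_ge0// lee_fin.
rewrite ge0_mule_fsuml => [|r]; last first.
  have [r0|r0] := leP 0%R r; first by rewrite mule_ge0.
  by rewrite preimage_nnfun0// preimage_set0 measure0 mule0.
apply: eq_fsbigr => r /[!inE] -[t _ <-].
have mphi := measurable_funPTI phi (measurable_set1 (phi t)).
rewrite -muleA -(kX _ mphi) -ge0_integralZl//.
- by apply: eq_integral => w _; rewrite !EFinM muleA.
- exact/measurable_EFinP/measurable_funM/mk/measurable_indic/measurable_funPTI.
- by move=> w _; rewrite lee_fin mulr_ge0.
- by rewrite lee_fin fun_ge0.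
Qed.

(* If h integrates every indicator 1_B(X) as the constant c does, it integrates
   every nonnegative g(X) as c does: by linearity for simple g, then by
   monotone convergence along the simple approximations of g. *)
Lemma integral_comp_weight (h : T -> R) (c : \bar R) :
  measurable_fun setT h -> (forall w, 0 <= h w)%R ->
  c \is a fin_num -> 0 <= c ->
  (forall B, measurable B ->
    \int[mu]_w (\1_B (X w) * h w)%:E = mu (X @^-1` B) * c) ->
  forall g : R -> R, measurable_fun setT g -> (forall r, 0 <= g r)%R ->
  \int[mu]_w (g (X w) * h w)%:E = \int[mu]_w (g (X w))%:E * c.
Proof.
case: c => // c mh h0 _; rewrite lee_fin => c0 hX g mg g0.
have mgE : measurable_fun setT (EFin \o g) by exact/measurable_EFinP.
pose phi := nnsfun_approx measurableT mgE.
have approx (k : T -> R) : measurable_fun setT k -> (forall w, 0 <= k w)%R ->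
    \int[mu]_w (g (X w) * k w)%:E =
    limn (fun n => \int[mu]_w (phi n (X w) * k w)%:E).
  move=> mk k0; rewrite -monotone_convergence//; last 3 first.
  - move=> n; apply/measurable_EFinP/measurable_funM => //.
    exact: measurableT_comp.
  - by move=> n w _; rewrite lee_fin mulr_ge0.
  - move=> w _ n m nm; rewrite lee_fin ler_wpM2r//.
    exact/lefP/nd_nnsfun_approx.
  apply: eq_integral => w _; apply/esym/cvg_lim => //.
  under eq_fun do rewrite EFinM; rewrite EFinM.
  apply: cvgeZr => //; apply: (cvg_nnsfun_approx measurableT) => // r _.
  by rewrite lee_fin.
have cstX B : measurable B ->
    \int[mu]_w (\1_B (X w) * c)%:E = mu (X @^-1` B) * c%:E.
  move=> mB; have mXB : measurable (X @^-1` B) by exact: measurable_funPTI.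
  under eq_integral do rewrite EFinM.
  rewrite ge0_integralZr//; last exact/measurable_EFinP/measurable_indic.
  by rewrite -[I in I * _]/(\int[mu]_w (\1_(X @^-1` B) w)%:E) integral_indic// setIT.
rewrite -ge0_integralZr//; last 2 first.
- exact/measurable_EFinP/measurableT_comp.
- by move=> w _; rewrite lee_fin.
under [RHS]eq_integral do rewrite -EFinM.
rewrite (approx h)// (approx (fun=> c))//; congr (limn _); apply/funext => n.
by rewrite !(integral_nnsfun_comp_weight (a := c%:E)).
Qed.

End integral_comp_weight.

Section independence.
Context d (T : measurableType d) (R : realType) (P : probability T R).
Local Open Scope ereal_scope.

Definition indep3 (X1 X2 X3 : T -> R) := forall B1 B2 B3 : set R,
  measurable B1 -> measurable B2 -> measurable B3 ->
  P (X1 @^-1` B1 `&` X2 @^-1` B2 `&` X3 @^-1` B3) =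
  P (X1 @^-1` B1) * P (X2 @^-1` B2) * P (X3 @^-1` B3).

Lemma indep3_rotate X1 X2 X3 : indep3 X1 X2 X3 -> indep3 X2 X3 X1.
Proof.
move=> i123 B2 B3 B1 mB2 mB3 mB1.
by rewrite setIC setIA i123// [RHS]muleC muleA.
Qed.

Definition prod3_factorizes (X1 X2 X3 : T -> R) (g1 g2 g3 : R -> R) :=
  'E_P[fun w => (g1 (X1 w) * g2 (X2 w) * g3 (X3 w))%R] =
  'E_P[g1 \o X1] * 'E_P[g2 \o X2] * 'E_P[g3 \o X3].

Lemma prod3_factorizes_rotate X1 X2 X3 g1 g2 g3 :
  prod3_factorizes X2 X3 X1 g2 g3 g1 -> prod3_factorizes X1 X2 X3 g1 g2 g3.
Proof.
rewrite /prod3_factorizes => h231; rewrite -muleA muleC -h231.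
by congr ('E_P[_]); apply/funext => w; rewrite -mulrA mulrC.
Qed.

End independence.

Section expectation_prod3_ge0.
Context d (T : measurableType d) (R : realType) (P : probability T R).
Local Open Scope ereal_scope.
Variables (X1 X2 X3 : {RV P >-> R}) (g1 g2 g3 : R -> R).
Hypothesis i123 : indep3 P X1 X2 X3.
Hypotheses (mg1 : measurable_fun setT g1) (mg2 : measurable_fun setT g2)
  (mg3 : measurable_fun setT g3).
Hypotheses (g1_ge0 : forall r, (0 <= g1 r)%R) (g2_ge0 : forall r, (0 <= g2 r)%R)
  (g3_ge0 : forall r, (0 <= g3 r)%R).
Hypotheses (ig2 : g2 \o X2 \in Lfun P 1) (ig3 : g3 \o X3 \in Lfun P 1).

Let integral_comp_fin_num (X : {RV P >-> R}) g : g \o X \in Lfun P 1 ->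
  \int[P]_w (g (X w))%:E \is a fin_num.
Proof. by move/expectation_fin_num; rewrite unlock. Qed.

Let integral_comp_ge0 (X : {RV P >-> R}) g : (forall r, 0 <= g r)%R ->
  0 <= \int[P]_w (g (X w))%:E.
Proof. by move=> g0; apply: integral_ge0 => w _; rewrite lee_fin. Qed.

Let integral_g3_indic12 B1 B2 : measurable B1 -> measurable B2 ->
  \int[P]_w (g3 (X3 w) * (\1_B1 (X1 w) * \1_B2 (X2 w)))%:E =
  \int[P]_w (g3 (X3 w))%:E * (P (X1 @^-1` B1) * P (X2 @^-1` B2)).
Proof.
move=> mB1 mB2; have mX1B1 := measurable_funPTI X1 mB1.
have mX2B2 := measurable_funPTI X2 mB2.
rewrite (integral_comp_weight (c := P (X1 @^-1` B1) * P (X2 @^-1` B2)))//.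
- by apply: measurable_funM; exact: measurable_indic.
- by rewrite fin_numM// fin_num_measure.
- by rewrite mule_ge0.
move=> B mB; have mX3B := measurable_funPTI X3 mB.
have mI := measurableI _ _ (measurableI _ _ mX1B1 mX2B2) mX3B.
transitivity (\int[P]_w (\1_(X1 @^-1` B1 `&` X2 @^-1` B2 `&` X3 @^-1` B) w)%:E).
  by apply: eq_integral => w _; rewrite 2!indicI /= mulrC.
rewrite integral_indic// setIT.
by apply: (etrans (i123 mB1 mB2 mB)); rewrite [RHS]muleC.
Qed.

Let integral_g2_indic1_g3 B1 : measurable B1 ->
  \int[P]_w (g2 (X2 w) * (\1_B1 (X1 w) * g3 (X3 w)))%:E =
  \int[P]_w (g2 (X2 w))%:E * (P (X1 @^-1` B1) * \int[P]_w (g3 (X3 w))%:E).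
Proof.
move=> mB1; have mX1B1 := measurable_funPTI X1 mB1.
rewrite (integral_comp_weight (c := P (X1 @^-1` B1) * \int[P]_w (g3 (X3 w))%:E))//.
- apply: measurable_funM; [exact: measurable_indic|exact: measurableT_comp].
- by move=> w; rewrite mulr_ge0.
- by rewrite fin_numM ?fin_num_measure ?integral_comp_fin_num.
- by rewrite mule_ge0 ?integral_comp_ge0.
move=> B mB.
transitivity (\int[P]_w (g3 (X3 w) * (\1_B1 (X1 w) * \1_B (X2 w)))%:E).
  by apply: eq_integral => w _; congr (_%:E); ring.
by rewrite integral_g3_indic12// [LHS]muleC [P (X1 @^-1` B1) * _]muleC -muleA.
Qed.

(* Integrate out X3, then X2, then X1, each time by [integral_comp_weight] with
   the product of the remaining factors as the weight. *)
Lemma expectation_prod3_ge0 : prod3_factorizes P X1 X2 X3 g1 g2 g3.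
Proof.
rewrite /prod3_factorizes unlock; under eq_integral do rewrite -mulrA.
rewrite (integral_comp_weight
  (c := \int[P]_w (g2 (X2 w))%:E * \int[P]_w (g3 (X3 w))%:E))//.
- by rewrite muleA.
- apply: measurable_funM; exact: measurableT_comp.
- by move=> w; rewrite mulr_ge0.
- by rewrite fin_numM ?integral_comp_fin_num.
- by rewrite mule_ge0 ?integral_comp_ge0.
move=> B mB.
transitivity (\int[P]_w (g2 (X2 w) * (\1_B (X1 w) * g3 (X3 w)))%:E).
  by apply: eq_integral => w _; congr (_%:E); ring.
by rewrite integral_g2_indic1_g3// muleCA.
Qed.

End expectation_prod3_ge0.

Section expectation_prod3.
Context d (T : measurableType d) (R : realType) (P : probability T R).
Variables (X1 X2 X3 : {RV P >-> R}).
Hypothesis i123 : indep3 P X1 X2 X3.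

Lemma Lfun1_prod3 (g1 g2 g3 : R -> R) :
  measurable_fun setT g1 -> measurable_fun setT g2 -> measurable_fun setT g3 ->
  g1 \o X1 \in Lfun P 1 -> g2 \o X2 \in Lfun P 1 -> g3 \o X3 \in Lfun P 1 ->
  (fun w => g1 (X1 w) * g2 (X2 w) * g3 (X3 w)) \in Lfun P 1.
Proof.
move=> mg1 mg2 mg3 ig1 ig2 ig3.
apply/Lfun1_integrable/integrableP; split.
  apply/measurable_EFinP.
  by apply: measurable_funM; [apply: measurable_funM|]; exact: measurableT_comp.
have normX (X : {RV P >-> R}) g : measurable_fun setT g -> g \o X \in Lfun P 1 ->
    [/\ measurable_fun setT (Num.norm \o g), forall r, 0 <= `|g r| &
        (Num.norm \o g) \o X \in Lfun P 1].
  by move=> mg ig; split; [exact: measurableT_comp|by []|exact: Lfun_norm].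
have [mn1 n1_ge0 in1] := normX _ _ mg1 ig1.
have [mn2 n2_ge0 in2] := normX _ _ mg2 ig2.
have [mn3 n3_ge0 in3] := normX _ _ mg3 ig3.
rewrite [I in (I < _)%E](_ : _ = 'E_P[fun w => ((Num.norm \o g1) (X1 w) *
    (Num.norm \o g2) (X2 w) * (Num.norm \o g3) (X3 w))%R]%E); last first.
  by rewrite unlock; apply: eq_integral => w _; rewrite /= !normrM.
rewrite (expectation_prod3_ge0 i123)// ltey_eq !fin_numM//.
all: exact: expectation_fin_num.
Qed.

Lemma prod3_factorizes_signed_first (g1 g2 g3 : R -> R) :
  measurable_fun setT g1 -> measurable_fun setT g2 -> measurable_fun setT g3 ->
  g1 \o X1 \in Lfun P 1 -> g2 \o X2 \in Lfun P 1 -> g3 \o X3 \in Lfun P 1 ->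
  (forall h : R -> R, measurable_fun setT h -> (forall r, 0 <= h r) ->
     h \o X1 \in Lfun P 1 -> prod3_factorizes P X1 X2 X3 h g2 g3) ->
  prod3_factorizes P X1 X2 X3 g1 g2 g3.
Proof.
move=> mg1 mg2 mg3 ig1 ig2 ig3 nn.
have mp := measurable_funrpos mg1; have mn := measurable_funrneg mg1.
have ip : g1^\+ \o X1 \in Lfun P 1.
  by apply/Lfun1_integrable/integrable_funrpos => //; exact/Lfun1_integrable.
have in_ : g1^\- \o X1 \in Lfun P 1.
  by apply/Lfun1_integrable/integrable_funrneg => //; exact/Lfun1_integrable.
have g1E r : g1^\+ r - g1^\- r = g1 r := congr1 (fun f => f r) (funrposBneg g1).
have E2 := expectation_fin_num ig2; have E3 := expectation_fin_num ig3.
have Ep := expectation_fin_num ip.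
rewrite /prod3_factorizes.
have -> : (fun w => g1 (X1 w) * g2 (X2 w) * g3 (X3 w)) =
    (fun w => g1^\+ (X1 w) * g2 (X2 w) * g3 (X3 w)) \-
    (fun w => g1^\- (X1 w) * g2 (X2 w) * g3 (X3 w)).
  by apply/funext => w /=; rewrite -mulrBl -mulrBl g1E.
have -> : g1 \o X1 = (g1^\+ \o X1) \- (g1^\- \o X1).
  by apply/funext => w /=; rewrite g1E.
rewrite !expectationB ?Lfun1_prod3// nn ?funrpos_ge0// nn ?funrneg_ge0//.
by rewrite -!muleBl// ?fin_num_adde_defr// fin_numM.
Qed.

End expectation_prod3.

(* Each application of [prod3_factorizes_signed_first] makes one more function
   nonnegative; the rotations bring each function in turn to the first slot. *)
Lemma expectation_prod3 d (T : measurableType d) (R : realType)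
    (P : probability T R) (X1 X2 X3 : {RV P >-> R}) (g1 g2 g3 : R -> R) :
  indep3 P X1 X2 X3 ->
  measurable_fun setT g1 -> measurable_fun setT g2 -> measurable_fun setT g3 ->
  g1 \o X1 \in Lfun P 1 -> g2 \o X2 \in Lfun P 1 -> g3 \o X3 \in Lfun P 1 ->
  prod3_factorizes P X1 X2 X3 g1 g2 g3.
Proof.
move=> i123 mg1 mg2 mg3 ig1 ig2 ig3.
have i231 := indep3_rotate i123; have i312 := indep3_rotate i231.
apply: (prod3_factorizes_signed_first i123) => // h1 mh1 h1_ge0 ih1.
apply: prod3_factorizes_rotate.
apply: (prod3_factorizes_signed_first i231) => // h2 mh2 h2_ge0 ih2.
apply: prod3_factorizes_rotate.
apply: (prod3_factorizes_signed_first i312) => // h3 mh3 h3_ge0 ih3.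
exact: expectation_prod3_ge0.
Qed.

Section central_moments.
Context d (T : measurableType d) (R : realType) (P : probability T R).

Lemma Lfun1_central_power (X : T -> R) (x0 p : R) (k : nat) :
  X \in Lfun P p%:E -> k%:R <= p ->
  (fun w => (X w - x0) ^+ k) \in Lfun P 1.
Proof.
case: k => [|k] Xp kp.
  by rewrite (_ : (fun _ => _) = cst 1); [exact: Lfun_cst|exact/funext].
have k1 : (1 <= k.+1%:R :> R) by rewrite ler1n.
have Yp : X \- cst x0 \in Lfun P p%:E.
  apply: rpredB => //; first by rewrite lee_fin (le_trans k1).
  by move=> ?; exact: Lfun_cst.
have Yk : X \- cst x0 \in Lfun P k.+1%:R%:E.
  apply: Lfun_subset Yp; rewrite ?lee_fin//; first exact: (le_trans k1).
  exact: fin_num_measure.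
apply/Lfun1_integrable/integrableP; split.
  apply/measurable_EFinP/measurable_funX.
  by move: Yk => /andP[]; rewrite inE.
move: (Lfun_integrable k1 Yk) => /integrableP[_].
congr (_ < _)%E; apply: eq_integral => w _.
by rewrite /= powR_mulrn// normrX normr_id -normrX.
Qed.

Definition central_moments_upto (X : T -> R) (x0 : R) (m : nat -> R) (N : nat) :=
  forall k, (k <= N)%N ->
  (fun w => (X w - x0) ^+ k) \in Lfun P 1 /\ cmoment P X x0 k = (m k)%:E.

Lemma cmoment0 (X : T -> R) (x0 : R) : cmoment P X x0 0 = 1%:E.
Proof.
by rewrite /cmoment (_ : (fun _ => _) = cst 1) ?expectation_cst//; exact/funext.
Qed.

Lemma central_moments_upto_Lfun (X : T -> R) (x0 p : R) (N : nat) :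
  X \in Lfun P p%:E -> N%:R <= p ->
  central_moments_upto X x0 (fun k => fine (cmoment P X x0 k)) N.
Proof.
move=> Xp Np k kN; have kp : k%:R <= p by rewrite (le_trans _ Np)// ler_nat.
have Xk := Lfun1_central_power x0 Xp kp.
by split; rewrite ?fineK//; exact: expectation_fin_num.
Qed.

Lemma central_moments_upto_eq (X Y : T -> R) (x0 p : R) (m : nat -> R) (N : nat) :
  central_moments_upto X x0 m N -> Y \in Lfun P p%:E -> N%:R <= p ->
  (forall k, (1 <= k <= N)%N -> cmoment P Y x0 k = cmoment P X x0 k) ->
  central_moments_upto Y x0 m N.
Proof.
move=> cmX Yp Np YX k kN; have kp : k%:R <= p by rewrite (le_trans _ Np)// ler_nat.
split; first exact: Lfun1_central_power Yp kp.
by case: k kN {kp} => [|k] kN; rewrite -(cmX _ kN).2 ?cmoment0// YX.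
Qed.

Lemma central_moment1_eq0 (X : T -> R) (x0 : R) (m : nat -> R) (N : nat) :
  central_moments_upto X x0 m N -> (0 < N)%N -> 'E_P[X]%E = x0%:E -> m 1%N = 0.
Proof.
move=> cmX N0 EX; have [iX1] := cmX 1%N N0; rewrite /cmoment => eX1.
move: EX; rewrite (_ : X = (fun w => (X w - x0) ^+ 1) \+ cst x0); last first.
  by apply/funext => w; rewrite /= expr1 subrK.
rewrite expectationD ?Lfun_cst// eX1 expectation_cst -EFinD => -[x0E].
by rewrite -(addrK x0 (m 1%N)) x0E subrr.
Qed.

Lemma variance_cmoment (X : T -> R) (x0 : R) :
  'E_P[X]%E = x0%:E -> 'V_P[X] = cmoment P X x0 2.
Proof. by move=> EX; rewrite /variance unlock EX /cmoment; congr ('E_P[_])%E. Qed.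

End central_moments.

(* Polynomials in three variables are encoded as lists of monomials, so that
   their squares and moments unfold to explicit sums by computation. *)
Record monomial3 (R : Type) := Monomial3 {
  mcoef : R; mdeg1 : nat; mdeg2 : nat; mdeg3 : nat }.

Definition mono3_deg_le (R : Type) (N : nat) (t : monomial3 R) :=
  [&& mdeg1 t <= N, mdeg2 t <= N & mdeg3 t <= N]%N.

Section poly3.
Variable R : comNzRingType.
Implicit Types (t u : monomial3 R) (s : seq (monomial3 R)).

Definition mono3_mul t u := Monomial3 (mcoef t * mcoef u)
  (mdeg1 t + mdeg1 u) (mdeg2 t + mdeg2 u) (mdeg3 t + mdeg3 u).

Definition poly3_sqr s := [seq mono3_mul t u | t <- s, u <- s].

Definition mono3_eval t (a b c : R) :=
  a ^+ mdeg1 t * b ^+ mdeg2 t * c ^+ mdeg3 t * mcoef t.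

Definition poly3_eval s (a b c : R) := \sum_(t <- s) mono3_eval t a b c.

(* The expectation of [poly3_eval s] at three independent variables whose
   k-th moments are all [m k]. *)
Definition poly3_moment s (m : nat -> R) :=
  \sum_(t <- s) m (mdeg1 t) * m (mdeg2 t) * m (mdeg3 t) * mcoef t.

Lemma poly3_eval_sqr s a b c :
  poly3_eval (poly3_sqr s) a b c = poly3_eval s a b c ^+ 2.
Proof.
rewrite /poly3_eval /poly3_sqr expr2 big_allpairs_dep big_distrl /=.
apply: eq_bigr => t _; rewrite big_distrr; apply: eq_bigr => u _.
by rewrite /mono3_eval /= !exprD; ring.
Qed.

End poly3.

Section centered_poly3.
Context d (T : measurableType d) (R : realType) (P : probability T R).
Variables (X1 X2 X3 : {RV P >-> R}) (x0 : R) (m : nat -> R) (N : nat).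
Hypotheses (i123 : indep3 P X1 X2 X3) (cm1 : central_moments_upto P X1 x0 m N)
  (cm2 : central_moments_upto P X2 x0 m N) (cm3 : central_moments_upto P X3 x0 m N).
Implicit Types (t : monomial3 R) (s : seq (monomial3 R)).

Local Notation centered_mono t :=
  (fun w => mono3_eval t (X1 w - x0) (X2 w - x0) (X3 w - x0)).
Local Notation centered s :=
  (fun w => poly3_eval s (X1 w - x0) (X2 w - x0) (X3 w - x0)).

Local Notation centered_prod t := (fun w =>
  (X1 w - x0) ^+ mdeg1 t * (X2 w - x0) ^+ mdeg2 t * (X3 w - x0) ^+ mdeg3 t).

Let mpow k : measurable_fun setT (fun r : R => (r - x0) ^+ k).
Proof. by apply: measurable_funX; apply: measurable_funB. Qed.

Let centered_prod_Lfun1_expectation t : mono3_deg_le N t ->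
  centered_prod t \in Lfun P 1 /\
  'E_P[centered_prod t]%E = (m (mdeg1 t) * m (mdeg2 t) * m (mdeg3 t))%:E.
Proof.
case/and3P => t1 t2 t3.
have [i1 e1] := cm1 t1; have [i2 e2] := cm2 t2; have [i3 e3] := cm3 t3.
split; first exact (Lfun1_prod3 i123 (mpow _) (mpow _) (mpow _) i1 i2 i3).
rewrite (expectation_prod3 i123 (mpow _) (mpow _) (mpow _) i1 i2 i3).
by rewrite !EFinM -e1 -e2 -e3.
Qed.

Lemma Lfun1_centered_mono t : mono3_deg_le N t -> centered_mono t \in Lfun P 1.
Proof.
by move=> /centered_prod_Lfun1_expectation[i _]; apply: (Lfun_scale _ (lexx 1) i).
Qed.

Lemma expectation_centered_mono t : mono3_deg_le N t ->
  'E_P[centered_mono t]%E =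
  (m (mdeg1 t) * m (mdeg2 t) * m (mdeg3 t) * mcoef t)%:E.
Proof.
by move=> /centered_prod_Lfun1_expectation[i e]; rewrite [LHS](expectationZl _ i) e muleC.
Qed.

Let centered_nil : centered [::] = cst 0.
Proof. by apply/funext => w; rewrite /poly3_eval big_nil. Qed.

Let centered_cons t s : centered (t :: s) = centered_mono t \+ centered s.
Proof. by apply/funext => w; rewrite /poly3_eval big_cons. Qed.

Lemma Lfun1_centered_poly s : all (mono3_deg_le N) s -> centered s \in Lfun P 1.
Proof.
elim: s => [_|t s IH /andP[tN sN]]; first by rewrite centered_nil Lfun_cst.
by rewrite centered_cons; apply: rpredD; [exact (Lfun1_centered_mono tN)|exact (IH sN)].
Qed.

Lemma expectation_centered_poly s : all (mono3_deg_le N) s ->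
  'E_P[centered s]%E = (poly3_moment s m)%:E.
Proof.
elim: s => [_|t s IH /andP[tN sN]].
  by rewrite centered_nil expectation_cst /poly3_moment big_nil.
rewrite centered_cons expectationD ?Lfun1_centered_mono ?Lfun1_centered_poly//.
by rewrite expectation_centered_mono// (IH sN) /poly3_moment big_cons.
Qed.

End centered_poly3.

Section uSE_variance.
Context d (T : measurableType d) (R : realType) (P : probability T R).
Variables (A B C : {RV P >-> R}) (x0 y0 : R) (m : nat -> R).
Hypotheses (iABC : indep3 P A B C) (cmA : central_moments_upto P A x0 m 4)
  (cmB : central_moments_upto P B x0 m 4) (cmC : central_moments_upto P C x0 m 4).
Hypothesis m1 : m 1%N = 0.

Let U w := (A w - y0) ^+ 2 - (B w - C w) ^+ 2 / 2.
Let delta := x0 - y0.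
Local Notation centered s :=
  (fun w => poly3_eval s (A w - x0) (B w - x0) (C w - x0)).

(* [U - delta ^+ 2] in the centred variables *)
Let sD := [:: Monomial3 1 2 0 0; Monomial3 (2 * delta) 1 0 0;
  Monomial3 (- 2^-1) 0 2 0; Monomial3 (- 2^-1) 0 0 2; Monomial3 1 0 1 1].
(* [(A - y0) ^+ 2 - E[(A - y0) ^+ 2]] in the centred variables *)
Let sP := [:: Monomial3 1 2 0 0; Monomial3 (2 * delta) 1 0 0;
  Monomial3 (- m 2) 0 0 0].

Let m0 : m 0 = 1.
Proof. by have [_] := cmA (leq0n 4); rewrite cmoment0 => -[]. Qed.

Let U_centered w : U w = centered sD w + delta ^+ 2.
Proof.
rewrite /U /poly3_eval /sD !big_cons big_nil /mono3_eval /= /delta.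
by field.
Qed.

Lemma expectation_uSE : 'E_P[U]%E = (delta ^+ 2)%:E.
Proof.
rewrite (_ : U = centered sD \+ cst (delta ^+ 2)); last exact/funext/U_centered.
rewrite expectationD ?Lfun_cst ?expectation_cst//; last first.
  exact: (Lfun1_centered_poly iABC cmA cmB cmC).
rewrite (expectation_centered_poly iABC cmA cmB cmC)// -EFinD; congr (_%:E).
by rewrite /poly3_moment /sD !big_cons big_nil /= m0 m1; field.
Qed.

Lemma variance_uSE : 'V_P[U] = (m 4 - m 2 ^+ 2 + 4 * delta * m 3 +
  4 * delta ^+ 2 * m 2 + (m 4 + m 2 ^+ 2) / 2)%:E.
Proof.
have -> : 'V_P[U] = 'E_P[centered (poly3_sqr sD)]%E.
  rewrite /variance unlock expectation_uSE; congr ('E_P[_])%E; apply/funext => w.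
  by rewrite poly3_eval_sqr !fctE /= U_centered addrK expr2.
rewrite (expectation_centered_poly iABC cmA cmB cmC)//; congr (_%:E).
rewrite /poly3_moment /poly3_sqr /sD /= !big_cons big_nil /= /addn /= m0 m1.
by field.
Qed.

Lemma var_sqr_moment_ge0 :
  0 <= m 4 - m 2 ^+ 2 + 4 * delta * m 3 + 4 * delta ^+ 2 * m 2.
Proof.
have : 0 <= poly3_moment (poly3_sqr sP) m.
  rewrite -lee_fin -(expectation_centered_poly iABC cmA cmB cmC)//.
  by apply: expectation_ge0 => w; rewrite poly3_eval_sqr sqr_ge0.
rewrite /poly3_moment /poly3_sqr /sP /= !big_cons big_nil /= /addn /= m0 m1.
lra.
Qed.

Lemma variance_uSE_ge : (((m 4 + m 2 ^+ 2) / 2)%:E <= 'V_P[U])%E.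
Proof. by rewrite variance_uSE lee_fin; have := var_sqr_moment_ge0; lra. Qed.

End uSE_variance.

Lemma abc_family_indep3 d (T : measurableType d) (R : realType)
    (P : probability T R) (n : nat) (a b c : 'I_n -> {RV P >-> R}) :
  mutually_independent P (abc_family (fun i => a i : T -> R)
    (fun i => b i : T -> R) (fun i => c i : T -> R)) ->
  forall i, indep3 P (a i) (b i) (c i).
Proof.
move=> abc i B1 B2 B3 mB1 mB2 mB3.
pose B (k : 'I_n + 'I_n + 'I_n) := match k with
  | inl (inl _) => B1 | inl (inr _) => B2 | inr _ => B3 end.
have mB k : measurable (B k) by case: k => [[]|].
have := abc [set inl (inl i); inl (inr i); inr i]%SET B mB.
rewrite finset.setUC big_setU1 ?big_setU1 ?big_set1 ?inE//=.
set S := (\bigcap_(j in _) _) => abcE.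
have -> : a i @^-1` B1 `&` b i @^-1` B2 `&` c i @^-1` B3 = S.
  apply/seteqP; split => [w [[a1 b2] c3] k|w]; rewrite /S /bigcap /=.
    by rewrite !inE => /or3P[] /eqP ->.
  move=> Sw; split; [split|].
  - by apply: (Sw (inl (inl i))); rewrite !inE eqxx ?orbT.
  - by apply: (Sw (inl (inr i))); rewrite !inE eqxx ?orbT.
  - by apply: (Sw (inr i)); rewrite !inE eqxx.
have mXa := measurable_funPTI (a i) mB1; have mXb := measurable_funPTI (b i) mB2.
have mXc := measurable_funPTI (c i) mB3.
by apply: (etrans abcE); rewrite !EFinM !fineK ?fin_num_measure// muleC.
Qed.

Theorem lemmaE4 (R : realType) (d : measure_display) (T : measurableType d)
  (P : probability T R) (n : nat)
  (x y : 'rV[R]_n) (f : 'rV[R]_n -> 'rV[R]_n)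
  (a b c : 'I_n -> {RV P >-> R})
  (Hindep : mutually_independent P
              (abc_family (fun i => a i : T -> R) (fun i => b i : T -> R)
                          (fun i => c i : T -> R)))
  (Hmean : forall i, [/\ 'E_P[a i] = (x ord0 i)%:E,
                         'E_P[b i] = (x ord0 i)%:E &
                         'E_P[c i] = (x ord0 i)%:E]%E)
  (Hfin : forall i, [/\ (a i : T -> R) \in Lfun P 6%:E,
                        (b i : T -> R) \in Lfun P 6%:E &
                        (c i : T -> R) \in Lfun P 6%:E])
  (Hcommon : forall i (k : nat), (1 <= k <= 6)%N ->
       cmoment P (a i) (x ord0 i) k = cmoment P (b i) (x ord0 i) k /\
       cmoment P (b i) (x ord0 i) k = cmoment P (c i) (x ord0 i) k) :
  forall i : 'I_n,
    let sigma2 := fine 'V_P[a i] in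
    let mu4 := fine (cmoment P (a i) (x ord0 i) 4) in
    (((mu4 + sigma2 ^+ 2) / 2)%:E <=
       'V_P[uSE (fun j => a j : T -> R) (fun j => b j : T -> R)
                (fun j => c j : T -> R) (f y) i])%E.
Proof.
move=> i; cbv zeta.
have [EA _ _] := Hmean i; have [LA LB LC] := Hfin i.
set x0 := x ord0 i; pose m k := fine (cmoment P (a i) x0 k).
have le46 : 4%:R <= 6 :> R by rewrite ler_nat.
have cmA : central_moments_upto P (a i) x0 m 4 := central_moments_upto_Lfun x0 LA le46.
have common k : (1 <= k <= 4)%N -> (1 <= k <= 6)%N.
  by case/andP => -> k4; rewrite (leq_trans k4).
have cmB : central_moments_upto P (b i) x0 m 4.
  apply: (central_moments_upto_eq cmA LB le46) => k /common k6.
  by rewrite (Hcommon i k k6).1.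
have cmC : central_moments_upto P (c i) x0 m 4.
  apply: (central_moments_upto_eq cmA LC le46) => k /common k6.
  by rewrite -(Hcommon i k k6).2 (Hcommon i k k6).1.
have m1 : m 1%N = 0 := central_moment1_eq0 cmA isT EA.
rewrite (variance_cmoment EA).
exact: variance_uSE_ge (abc_family_indep3 Hindep i) cmA cmB cmC m1.
Qed.
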